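(* Let $N\ge3$, $0\le p\le\lfloor N/2\rfloor-1$, $\nu_1,\dots,\nu_{p+1}\in\mathbb C$ and $\mathcal F=\mathcal F^{\mathcal P}_{p\prec0}(\nu_1,\dots,\nu_{p+1})$. Let $\mathfrak s\subset sl(N)$ be the subalgebra spanned by $E_{ij}$ ($i\ne j$) and $E_{ii}-E_{jj}$ with $p+2\le i,j\le N-p-1$ (a copy of $sl(N-2p-2)$). Then every $X\in\mathfrak s$ remains primitive in the twisted Hopf algebra: $\mathcal F\,\Delta(X)\,\mathcal F^{-1}=X\otimes1+1\otimes X$.
   Context: Work over $\mathbb C$ with $U=U(sl(N))$ with primitive generators ($\Delta(x)=x\otimes1+1\otimes x$). $E_{ij}$ are matrix units of $gl(N)$, $I=\sum_sE_{ss}$. $\xi$ is a formal parameter and all computations are in $\xi$-adically completed algebras $U[[\xi]]$, $(U\otimes U)[[\xi]]$. $\sigma_{ij}(c):=\ln(1+\xi cE_{ij})$, $H^{\mathcal P}_k:=E_{kk}-\frac1NI$. For $0\le k\le\lfloor N/2\rfloor-1$, $\mathcal F^{\mathcal P}_k(\nu):=\big(\prod_{s=k+2}^{N-k-1}\exp(\xi\nu E_{k+1,s}\otimes E_{s,N-k})\big)\exp(H^{\mathcal P}_{k+1}\otimes\sigma_{k+1,N-k}(\nu))$, and $\mathcal F^{\mathcal P}_{p\prec0}(\nu_1,\dots,\nu_{p+1}):=\mathcal F^{\mathcal P}_p(\nu_{p+1})\cdots\mathcal F^{\mathcal P}_0(\nu_1)$. *)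

From mathcomp Require Import all_boot all_algebra complex.
From mathcomp Require Import reals Rstruct.
Set Implicit Arguments. Unset Strict Implicit. Unset Printing Implicit Defensive.
Import GRing.Theory.
Local Open Scope ring_scope.

Definition C : numClosedFieldType := Rdefinitions.R[i].

(* Matrix unit E_{ij} of gl(N), with 1-based indices i, j in 1..N. *)
Definition Emx (N i j : nat) : 'M[C]_N :=
  \matrix_(a < N, b < N) (((a.+1 == i) && (b.+1 == j))%:R : C).

Definition HP (N k : nat) : 'M[C]_N := Emx N k k - (N%:R^-1 : C)%:M.

Section PS.
Variable B : algType C.

Definition ps := nat -> B.
Definition ps_const (b : B) : ps := fun n => if n == 0%N then b else 0.
Definition ps_one : ps := ps_const 1.
Definition ps_add (f g : ps) : ps := fun n => f n + g n.
Definition ps_sub (f g : ps) : ps := fun n => f n - g n.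
Definition ps_mul (f g : ps) : ps :=
  fun n => \sum_(i < n.+1) f i * g (n - i)%N.
Fixpoint ps_pow (f : ps) (k : nat) : ps :=
  if k is k'.+1 then ps_mul f (ps_pow f k') else ps_one.
Definition ps_xi (b : B) : ps := fun n => if n == 1%N then b else 0.
(* exp f = sum_k f^k / k!, for f with zero constant term (then the
   coefficient of xi^n only receives contributions from k <= n). *)
Definition ps_exp (f : ps) : ps :=
  fun n => \sum_(k < n.+1) ((k`!)%:R^-1 : C) *: ps_pow f k n.
Definition ps_log1p (f : ps) : ps :=
  fun n => \sum_(1 <= k < n.+1) (((-1) ^+ k.+1 / k%:R) : C) *: ps_pow f k n.
(* inverse of a series with constant term 1: f^{-1} = sum_k (1 - f)^k. *)
Definition ps_inv (f : ps) : ps :=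
  fun n => \sum_(k < n.+1) ps_pow (ps_sub ps_one f) k n.
End PS.

(* Realization of U(gl N) (x) U(gl N): two Lie algebra homomorphisms
   rho1 (X |-> X (x) 1) and rho2 (X |-> 1 (x) X) from gl(N) into an
   associative C-algebra B with commuting images. *)
Definition lie_hom (N : nat) (B : algType C) (rho : {linear 'M[C]_N -> B}) :=
  forall X Y : 'M[C]_N, rho (X *m Y - Y *m X) = rho X * rho Y - rho Y * rho X.

Definition commuting (N : nat) (B : algType C) (rho1 rho2 : 'M[C]_N -> B) :=
  forall X Y : 'M[C]_N, rho1 X * rho2 Y = rho2 Y * rho1 X.

Section Twist.
Variables (N : nat) (B : algType C) (rho1 rho2 : {linear 'M[C]_N -> B}).

Definition sigma2 (i j : nat) (c : C) : ps B :=
  ps_log1p (ps_xi (c *: rho2 (Emx N i j))).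

Definition FP (k : nat) (nu : C) : ps B :=
  ps_mul
    (\big[@ps_mul B/ps_one B]_(k.+2 <= s < N - k)
        ps_exp (ps_xi (nu *: (rho1 (Emx N k.+1 s) * rho2 (Emx N s (N - k))))))
    (ps_exp (ps_mul (ps_const (rho1 (HP N k.+1))) (sigma2 k.+1 (N - k) nu))).

(* F^P_{p<0}(nu_1,...,nu_{p+1}) = F^P_p(nu_{p+1}) ... F^P_0(nu_1);
   nu is indexed from 1 (nu 0 is unused). *)
Fixpoint Fprec (p : nat) (nu : nat -> C) : ps B :=
  match p with
  | 0 => FP 0 (nu 1%N)
  | p'.+1 => ps_mul (FP p (nu p.+1)) (Fprec p' nu)
  end.
End Twist.

(* X lies in s = span{E_ij (i<>j), E_ii - E_jj : p+2 <= i,j <= N-p-1}: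
   X is supported on that index block and has trace 0. *)
Definition in_s (N p : nat) (X : 'M[C]_N) : Prop :=
  \tr X = 0 /\
  forall a b : 'I_N,
    ~~ [&& p.+2 <= a.+1, a.+1 <= N - p.+1, p.+2 <= b.+1 & b.+1 <= N - p.+1]%N ->
    X a b = 0.

From mathcomp Require Import all_boot all_algebra complex.
From Stdlib Require Import FunctionalExtensionality.
From mathcomp Require Import ring zify.
Set Implicit Arguments. Unset Strict Implicit. Unset Printing Implicit Defensive.
Import GRing.Theory Num.Theory.
Local Open Scope ring_scope.

(* Put d = X (x) 1 + 1 (x) X.  It suffices that d commutes with every
   coefficient of F, for then F d F^-1 = d F F^-1 = d.  The factors of F^P_k
   are exponentials, and d commutes with their exponents: X is supported on
   the index block p+2 .. N-p-1, which avoids k+1 and N-k, so X commutes with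
   H^P_(k+1) and E_(k+1,N-k).  A single term E_(k+1,s) (x) E_(s,N-k) does not
   commute with d, but its commutator is
   E_(k+1,s) X (x) E_(s,N-k) - E_(k+1,s) (x) X E_(s,N-k); the terms with s
   outside k+2 .. N-k-1 vanish, so the sum over s may run over all s, and then
   the two halves cancel.  These terms commute pairwise, so the product of
   their exponentials is the exponential of their sum. *)
Lemma commrZ (B : algType C) (x y : B) (c : C) :
  GRing.comm x y -> GRing.comm x (c *: y).
Proof. by move=> cxy; rewrite /GRing.comm -scalerAl -scalerAr cxy. Qed.

Section PowerSeries.
Variable B : algType C.
Implicit Types (f g h : ps B) (a b d : B).

Lemma ps_mul_coef0 f g : ps_mul f g 0 = f 0 * g 0.
Proof. by rewrite /ps_mul big_ord1. Qed.

Lemma ps_mul_constl a h n : ps_mul (ps_const a) h n = a * h n.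
Proof.
rewrite /ps_mul big_ord_recl subn0 big1 ?addr0 // => i _.
by rewrite /ps_const mul0r.
Qed.

Lemma ps_mul_constr f a n : ps_mul f (ps_const a) n = f n * a.
Proof.
rewrite /ps_mul big_ord_recr /= subnn big1 ?add0r // => i _.
by rewrite /ps_const subn_eq0 leqNgt ltn_ord mulr0.
Qed.

Lemma ps_mul1l h n : ps_mul (ps_one B) h n = h n.
Proof. by rewrite ps_mul_constl mul1r. Qed.

Lemma ps_mulBl f g h n : ps_mul (ps_sub f g) h n = ps_mul f h n - ps_mul g h n.
Proof. by rewrite /ps_mul -sumrB; apply: eq_bigr => i _; rewrite mulrBl. Qed.

Lemma ps_pow_coef_small g k n : g 0 = 0 -> (n < k)%N -> ps_pow g k n = 0.
Proof.
move=> g0; elim: k n => [|k IHk] n //= ltnk.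
rewrite /ps_mul big1 // => -[[|i] ltin] _ /=; first by rewrite g0 mul0r.
by rewrite IHk ?mulr0 //; lia.
Qed.

Lemma ps_exp_coef0 f : ps_exp f 0 = 1.
Proof. by rewrite /ps_exp big_ord1 /= /ps_const fact0 invr1 scale1r. Qed.

(* [ps_inv f] is the geometric series in [1 - f]; multiplying by [f] telescopes it. *)
Lemma ps_mulV f n : f 0 = 1 -> ps_mul f (ps_inv f) n = ps_one B n.
Proof.
move=> f0; set g := ps_sub (ps_one B) f.
have g0 : g 0 = 0 by rewrite /g /ps_sub /ps_const f0 subrr.
have fE : f = ps_sub (ps_one B) g.
  by apply: functional_extensionality => i; rewrite /g /ps_sub opprB addrC subrK.
have inv_widen m : (m <= n)%N ->
    ps_inv f m = \sum_(k < n.+1) ps_pow g k m.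
  move=> lemn; rewrite /ps_inv (big_ord_widen n.+1 (fun k => ps_pow g k m)) //.
  rewrite big_mkcond /=; apply: eq_bigr => k _.
  by case: ltnP => // ltmk; rewrite ps_pow_coef_small.
transitivity (\sum_(k < n.+1) ps_mul f (ps_pow g k) n).
  rewrite /ps_mul exchange_big /=; apply: eq_bigr => i _.
  by rewrite inv_widen ?leq_subr // mulr_sumr.
rewrite (eq_bigr (fun k : 'I_n.+1 => ps_pow g k n - ps_pow g k.+1 n)); last first.
  by move=> k _; rewrite {1}fE ps_mulBl ps_mul1l.
rewrite sumrB big_ord_recl [X in _ - X]big_ord_recr.
by rewrite (@ps_pow_coef_small g n.+1 n) //= addr0 addrK.
Qed.

Definition ps_exp_xi a : ps B := fun n => ((n`!)%:R^-1 : C) *: a ^+ n.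

Lemma ps_pow_xi a k n : ps_pow (ps_xi a) k n = if k == n then a ^+ k else 0.
Proof.
elim: k n => [|k IHk] [|n] //=; rewrite /ps_mul.
- by rewrite big_ord1 /ps_xi mul0r.
- rewrite big_ord_recl /ps_xi mul0r add0r big_ord_recl subSS subn0 IHk /=.
  rewrite big1 ?addr0 => [|i _]; last by rewrite mul0r.
  by rewrite eqSS; case: eqP; rewrite ?exprS ?mulr0.
Qed.

Lemma ps_exp_xiE a : ps_exp (ps_xi a) = ps_exp_xi a.
Proof.
apply: functional_extensionality => n.
rewrite /ps_exp big_ord_recr /= ps_pow_xi eqxx big1 ?add0r // => i _.
by rewrite ps_pow_xi (ltn_eqF (ltn_ord i)) scaler0.
Qed.

Lemma ps_exp_xi0 : ps_exp_xi 0 = ps_one B.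
Proof.
apply: functional_extensionality => -[|n]; rewrite /ps_exp_xi /ps_const /=.
  by rewrite fact0 invr1 scale1r.
by rewrite expr0n scaler0.
Qed.

Lemma ps_exp_xiD a b :
  GRing.comm a b -> ps_mul (ps_exp_xi a) (ps_exp_xi b) = ps_exp_xi (a + b).
Proof.
move=> cab; apply: functional_extensionality => n.
rewrite /ps_mul /ps_exp_xi addrC (exprDn_comm n (commr_sym cab)) scaler_sumr.
apply: eq_bigr => -[i /= ltin] _.
rewrite -scalerAl -scalerAr scalerA (commrX _ (commr_sym (commrX _ cab))).
rewrite -[_ *+ 'C(n, i)]scaler_nat scalerA; congr (_ *: _).
have lein : (i <= n)%N by [].
have := congr1 (fun m => m%:R : C) (bin_fact lein); rewrite !natrM => binE.
have fact_neq0 m : (m`!%:R : C) != 0 by rewrite pnatr_eq0 -lt0n fact_gt0.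
have bin_neq0 : ('C(n, i)%:R : C) != 0 by rewrite pnatr_eq0 -lt0n bin_gt0.
rewrite -[(n`!)%:R]binE; field.
by rewrite bin_neq0 !fact_neq0.
Qed.

Lemma big_ps_exp_xi (r : seq nat) (a : nat -> B) :
  {in r &, forall s t, GRing.comm (a s) (a t)} ->
  \big[@ps_mul B/ps_one B]_(s <- r) ps_exp_xi (a s) = ps_exp_xi (\sum_(s <- r) a s).
Proof.
elim: r => [|s r IHr] comm_a; first by rewrite !big_nil ps_exp_xi0.
rewrite !big_cons IHr => [|t u rt ru]; last by apply: comm_a; rewrite inE ?rt ?ru orbT.
apply: ps_exp_xiD; rewrite big_seq; apply: commr_sum => t rt.
by apply: comm_a; rewrite inE ?eqxx ?rt ?orbT.
Qed.

Definition ps_commr d f := forall n, GRing.comm d (f n).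

Lemma ps_commr_const d a : GRing.comm d a -> ps_commr d (ps_const a).
Proof. by move=> cda [|n]; rewrite /ps_const //; apply: commr0. Qed.

Lemma ps_commr_xi d a : GRing.comm d a -> ps_commr d (ps_xi a).
Proof. by move=> cda n; rewrite /ps_xi; case: eqP => _ //; apply: commr0. Qed.

Lemma ps_commr_mul d f g : ps_commr d f -> ps_commr d g -> ps_commr d (ps_mul f g).
Proof. by move=> cf cg n; apply: commr_sum => i _; apply: commrM. Qed.

Lemma ps_commr_pow d f k : ps_commr d f -> ps_commr d (ps_pow f k).
Proof.
move=> cf; elim: k => [|k IHk] /=; last exact: ps_commr_mul.
exact/ps_commr_const/commr1.
Qed.

Lemma ps_commr_exp d f : ps_commr d f -> ps_commr d (ps_exp f).
Proof.
by move=> cf n; apply: commr_sum => k _; apply/commrZ/ps_commr_pow.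
Qed.

Lemma ps_commr_log1p d f : ps_commr d f -> ps_commr d (ps_log1p f).
Proof.
by move=> cf n; apply: commr_sum => k _; apply/commrZ/ps_commr_pow.
Qed.

Lemma ps_commr_exp_xi d a : GRing.comm d a -> ps_commr d (ps_exp_xi a).
Proof. by move=> cda n; apply/commrZ/commrX. Qed.

Lemma ps_conj_const f d n :
  f 0 = 1 -> ps_commr d f ->
  ps_mul (ps_mul f (ps_const d)) (ps_inv f) n = ps_const d n.
Proof.
move=> f0 cdf; transitivity (d * ps_mul f (ps_inv f) n).
  rewrite /ps_mul mulr_sumr; apply: eq_bigr => i _.
  by rewrite -/(ps_mul _ _ _) ps_mul_constr -(cdf i) mulrA.
by rewrite ps_mulV // /ps_one /ps_const; case: (n == 0)%N; rewrite ?mulr1 ?mulr0.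
Qed.

End PowerSeries.

Section MatrixUnits.
Variable N : nat.
Implicit Types (X : 'M[C]_N) (i j l m : nat).

Lemma Emx_mul0 i j l m : j != l -> Emx N i j *m Emx N l m = 0.
Proof.
move=> neq_jl; apply/matrixP => a b; rewrite !mxE big1 // => c _; rewrite !mxE.
case: (c.+1 =P j) => [cj|_]; last by rewrite andbF mul0r.
by rewrite cj (negbTE neq_jl) mulr0.
Qed.

Lemma Emx_mulmx0 i j X :
  (forall t c : 'I_N, t.+1 = j -> X t c = 0) -> Emx N i j *m X = 0.
Proof.
move=> Xrow0; apply/matrixP => a b; rewrite !mxE big1 // => c _; rewrite !mxE.
by case: (c.+1 =P j) => [/Xrow0 ->|_]; rewrite ?andbF ?mulr0 ?mul0r.
Qed.

Lemma mulmx_Emx0 i j X :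
  (forall t a : 'I_N, t.+1 = i -> X a t = 0) -> X *m Emx N i j = 0.
Proof.
move=> Xcol0; apply/matrixP => a b; rewrite !mxE big1 // => c _; rewrite !mxE.
by case: (c.+1 =P i) => [/Xcol0 ->|_]; rewrite ?andbF ?mul0r ?mulr0.
Qed.

Lemma sum_ord_succ_eq (F : 'I_N -> C) (s : 'I_N) :
  \sum_(t < N) ((t.+1 == s.+1)%:R * F t) = F s.
Proof.
rewrite (bigD1 s) // big1 => [|t neq_ts]; last first.
  by rewrite eqSS val_eqE (negbTE neq_ts) mul0r.
by rewrite eqxx mul1r /= addr0.
Qed.

Lemma Emx_mulmx i (s : 'I_N) X :
  Emx N i s.+1 *m X = \sum_(b < N) X s b *: Emx N i b.+1.
Proof.
apply/matrixP => a c; rewrite summxE !mxE.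
under eq_bigr do rewrite mxE -mulnb natrM -mulrA.
under [RHS]eq_bigr do rewrite !mxE -mulnb natrM mulrCA [X s _ * _]mulrC [c.+1 == _]eq_sym.
by rewrite -!mulr_sumr sum_ord_succ_eq (sum_ord_succ_eq (X s)).
Qed.

Lemma mulmx_Emx j (s : 'I_N) X :
  X *m Emx N s.+1 j = \sum_(a < N) X a s *: Emx N a.+1 j.
Proof.
apply/matrixP => x c; rewrite summxE !mxE.
under eq_bigr do rewrite mxE -mulnb natrM mulrA mulrC [X x _ * _]mulrC.
under [RHS]eq_bigr do rewrite !mxE -mulnb natrM mulrA mulrC [X _ s * _]mulrC [x.+1 == _]eq_sym.
by rewrite -!mulr_sumr sum_ord_succ_eq (sum_ord_succ_eq (X^~ s)).
Qed.
End MatrixUnits.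

Lemma big_nat_support (V : zmodType) (w : nat -> V) m n M :
  (0 < m)%N -> (m <= n <= M.+1)%N ->
  (forall s, (0 < s <= M)%N -> ~~ (m <= s < n)%N -> w s = 0) ->
  \sum_(m <= s < n) w s = \sum_(s < M) w s.+1.
Proof.
move=> m_gt0 /andP [le_mn le_nM] w0.
rewrite -(big_mkord xpredT (fun s => w s.+1)).
have -> : \sum_(0 <= s < M) w s.+1 = \sum_(1 <= s < M.+1) w s by rewrite big_add1.
rewrite (big_cat_nat m_gt0 (leq_trans le_mn le_nM)) (big_cat_nat le_mn le_nM).
rewrite [X in _ = X + _]big1_seq ?add0r; last first.
  by move=> s /andP [_]; rewrite mem_index_iota => s_lt; apply: w0; lia.
rewrite [X in _ = _ + X]big1_seq ?addr0 // => s /andP [_].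
by rewrite mem_index_iota => s_ge; apply: w0; lia.
Qed.

Section TensorSwap.
Variables (N : nat) (B : algType C) (rho1 rho2 : {linear 'M[C]_N -> B}).

(* Both sides equal [sum_(s, b) X_sb rho1 (E_(i,b)) rho2 (E_(s,j))]. *)
Lemma sum_Emx_tensor_swap i j (X : 'M[C]_N) :
  \sum_(s < N) rho1 (Emx N i s.+1 *m X) * rho2 (Emx N s.+1 j) =
  \sum_(s < N) rho1 (Emx N i s.+1) * rho2 (X *m Emx N s.+1 j).
Proof.
transitivity (\sum_(s < N) \sum_(b < N)
    X s b *: (rho1 (Emx N i b.+1) * rho2 (Emx N s.+1 j))).
  apply: eq_bigr => s _; rewrite Emx_mulmx linear_sum mulr_suml.
  by apply: eq_bigr => b _; rewrite linearZ -scalerAl.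
rewrite exchange_big; apply: eq_bigr => s _.
rewrite mulmx_Emx linear_sum mulr_sumr.
by apply: eq_bigr => a _; rewrite linearZ -scalerAr.
Qed.
End TensorSwap.

Lemma lie_hom_comm N (B : algType C) (rho : {linear 'M[C]_N -> B}) (M Y : 'M[C]_N) :
  lie_hom rho -> M *m Y = Y *m M -> GRing.comm (rho M) (rho Y).
Proof. by move=> rho_lie cMY; apply/eqP; rewrite -subr_eq0 -rho_lie cMY subrr linear0. Qed.

Section LieTensor.
Variables (N : nat) (B : algType C) (rho1 rho2 : {linear 'M[C]_N -> B}).
Hypotheses (rho1_lie : lie_hom rho1) (rho2_lie : lie_hom rho2).
Hypothesis rho12 : commuting rho1 rho2.

Lemma tensor_Emx_comm i j s r :
  s != i -> r != i -> s != j -> r != j ->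
  GRing.comm (rho1 (Emx N i s) * rho2 (Emx N s j))
             (rho1 (Emx N i r) * rho2 (Emx N r j)).
Proof.
move=> si ri sj rj.
have c1 : GRing.comm (rho1 (Emx N i s)) (rho1 (Emx N i r)).
  by apply: lie_hom_comm; rewrite // !Emx_mul0 // eq_sym.
have c2 : GRing.comm (rho2 (Emx N s j)) (rho2 (Emx N r j)).
  by apply: lie_hom_comm; rewrite // !Emx_mul0 // eq_sym.
by apply: commrM; apply: commr_sym; apply: commrM; rewrite // /GRing.comm rho12.
Qed.

Lemma tensor_commutator_Delta (X A A' : 'M[C]_N) :
  let d := rho1 X + rho2 X in
  rho1 A * rho2 A' * d - d * (rho1 A * rho2 A') =
  rho1 (A *m X - X *m A) * rho2 A' + rho1 A * rho2 (A' *m X - X *m A').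
Proof.
rewrite /= rho1_lie rho2_lie mulrDr mulrDl mulrBl !mulrBr !mulrA.
rewrite -[rho1 A * rho2 A' * rho1 X]mulrA -rho12 mulrA.
rewrite -[rho2 X * rho1 A]rho12.
by rewrite opprD addrACA.
Qed.
End LieTensor.

Section Block.
Variables (N p : nat) (B : algType C) (rho1 rho2 : {linear 'M[C]_N -> B}).
Hypotheses (rho1_lie : lie_hom rho1) (rho2_lie : lie_hom rho2).
Hypothesis rho12 : commuting rho1 rho2.
Hypothesis two_pS_le : (2 * p.+1 <= N)%N.
Variable X : 'M[C]_N.
Hypothesis X_block : forall a b : 'I_N,
  ~~ [&& p.+2 <= a.+1, a.+1 <= N - p.+1, p.+2 <= b.+1 & b.+1 <= N - p.+1]%N ->
  X a b = 0.

Let d := rho1 X + rho2 X.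

Lemma Emx_mulmx_block0 i j : ~~ (p.+2 <= j <= N - p.+1)%N -> Emx N i j *m X = 0.
Proof.
move=> j_out; apply: Emx_mulmx0 => t c tj; apply: X_block.
by rewrite -tj in j_out; apply: contra j_out => /and4P [-> ->].
Qed.

Lemma mulmx_Emx_block0 i j : ~~ (p.+2 <= i <= N - p.+1)%N -> X *m Emx N i j = 0.
Proof.
move=> i_out; apply: mulmx_Emx0 => t a ti; apply: X_block.
by rewrite -ti in i_out; apply: contra i_out => /and4P [_ _ -> ->].
Qed.

Section Factor.
Variables (k : nat) (nu : C).
Hypothesis k_le : (k <= p)%N.

Let kS_notin_block : ~~ (p.+2 <= k.+1 <= N - p.+1)%N.
Proof. by apply/negP; lia. Qed.

Let Nk_notin_block : ~~ (p.+2 <= N - k <= N - p.+1)%N.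
Proof. by apply/negP; lia. Qed.

Lemma HP_Delta_comm : GRing.comm d (rho1 (HP N k.+1)).
Proof.
apply: commr_sym; apply: commrD; last exact: rho12.
apply: lie_hom_comm => //.
rewrite /HP mulmxBl mulmxBr scalar_mxC.
by rewrite Emx_mulmx_block0 // mulmx_Emx_block0.
Qed.

Lemma Emx_Delta_comm : GRing.comm d (rho2 (Emx N k.+1 (N - k))).
Proof.
apply: commr_sym; apply: commrD; first exact/commr_sym/rho12.
apply: lie_hom_comm => //.
by rewrite Emx_mulmx_block0 // mulmx_Emx_block0.
Qed.

Let t s := rho1 (Emx N k.+1 s) * rho2 (Emx N s (N - k)).

Lemma sum_tensor_Emx_Delta_comm : GRing.comm d (\sum_(k.+2 <= s < N - k) t s).
Proof.
apply/esym/eqP; rewrite -subr_eq0 mulr_suml mulr_sumr -sumrB.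
under eq_bigr => s _ do rewrite tensor_commutator_Delta // mulmx_Emx_block0 //
  [Emx N s _ *m X]Emx_mulmx_block0 // !subr0 sub0r linearN mulrN.
pose w s := rho1 (Emx N k.+1 s *m X) * rho2 (Emx N s (N - k))
          - rho1 (Emx N k.+1 s) * rho2 (X *m Emx N s (N - k)).
rewrite (@big_nat_support _ w _ _ N) => [|//||s s_range s_out].
- by rewrite sumrB sum_Emx_tensor_swap subrr.
- lia.
have row0 : Emx N k.+1 s *m X = 0 by apply: Emx_mulmx_block0; apply/negP; lia.
have col0 : X *m Emx N s (N - k) = 0 by apply: mulmx_Emx_block0; apply/negP; lia.
by rewrite /w row0 col0 !linear0 mul0r mulr0 subrr.
Qed.

Lemma FP_Delta_comm : ps_commr d (FP rho1 rho2 k nu).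
Proof.
apply: ps_commr_mul.
  under eq_bigr => s _ do rewrite ps_exp_xiE.
  rewrite (@big_ps_exp_xi _ _ (fun s => nu *: t s)) => [|s r].
    by rewrite -scaler_sumr; apply/ps_commr_exp_xi/commrZ/sum_tensor_Emx_Delta_comm.
  rewrite !mem_index_iota => s_range r_range.
  by apply/commrZ/commr_sym/commrZ/tensor_Emx_comm => //; apply/eqP; lia.
apply/ps_commr_exp/ps_commr_mul; first exact/ps_commr_const/HP_Delta_comm.
exact/ps_commr_log1p/ps_commr_xi/commrZ/Emx_Delta_comm.
Qed.
End Factor.

Lemma Fprec_Delta_comm q nu : (q <= p)%N -> ps_commr d (Fprec rho1 rho2 q nu).
Proof.
elim: q => [|q IHq] q_le /=; first exact: FP_Delta_comm.
by apply: ps_commr_mul; [apply: FP_Delta_comm | apply: IHq; lia].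
Qed.
End Block.

Lemma FP_coef0 N (B : algType C) (rho1 rho2 : {linear 'M[C]_N -> B}) k nu :
  FP rho1 rho2 k nu 0 = 1.
Proof.
rewrite /FP ps_mul_coef0 ps_exp_coef0 mulr1.
apply: (big_ind (fun f : ps B => f 0 = 1)) => [|f g f0 g0|s _] //.
- by rewrite ps_mul_coef0 f0 g0 mulr1.
- exact: ps_exp_coef0.
Qed.

Lemma Fprec_coef0 N (B : algType C) (rho1 rho2 : {linear 'M[C]_N -> B}) q nu :
  Fprec rho1 rho2 q nu 0 = 1.
Proof.
elim: q => [|q IHq] /=; first exact: FP_coef0.
by rewrite ps_mul_coef0 FP_coef0 IHq mulr1.
Qed.

Theorem mainTheorem3 (N p : nat) (nu : nat -> C)
  (B : algType C) (rho1 rho2 : {linear 'M[C]_N -> B}) :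
  (3 <= N)%N ->
  (p <= N./2 - 1)%N ->
  lie_hom rho1 -> lie_hom rho2 -> commuting rho1 rho2 ->
  forall X : 'M[C]_N, in_s p X ->
  let F := Fprec rho1 rho2 p nu in
  let Delta := ps_const (rho1 X + rho2 X) in
  forall n : nat,
    ps_mul (ps_mul F Delta) (ps_inv F) n = Delta n.
Proof.
move=> N_ge3 p_le rho1_lie rho2_lie rho12 X [_ X_block] F Delta n.
have two_pS_le : (2 * p.+1 <= N)%N.
  have half_le : ((N./2).*2 <= N)%N by rewrite -[leqRHS]odd_double_half leq_addl.
  by rewrite -muln2 in half_le; move: (N./2) half_le p_le => h; lia.
apply: ps_conj_const; first exact: Fprec_coef0.
exact: (Fprec_Delta_comm rho1_lie rho2_lie rho12 two_pS_le X_block nu (leqnn p)).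
Qed.
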